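(* Let $0<\alpha<1$ and let $n$ be a positive integer. Assume the following induction hypothesis: for every integer $m$ with $1 \le m < n$, every digraph on $m$ vertices with minimum outdegree at least $\alpha m$ contains a directed cycle of length at most $4$. Let $G$ be a digraph on $n$ vertices such that: - every vertex of $G$ has outdegree exactly $r=\lceil \alpha n\rceil$; - $G$ contains no directed cycle of length at most $4$. Then for every arc $(u,v)\in E(G)$, $$n > r + \deg^-(v) + q(u,v) + (1-\alpha) r + (1-\alpha)^2\, t(u,v).$$
   Context: Digraphs have no loops and no parallel arcs; the arcs $(u,v)$ and $(v,u)$ together count as a directed cycle of length $2$. For a vertex $v$, define - $N^+(v)=\{u:(v,u)\in E(G)\}$; - $N^-(v)=\{u:(u,v)\in E(G)\}$; - $\deg^-(v)=|N^-(v)|$. For an arc $(u,v)\in E(G)$, define - $q(u,v)=|N^-(u)\setminus N^-(v)|$; - $t(u,v)=|N^+(u)\cap N^+(v)|$, the number of transitive triangles with base $(u,v)$. *)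

From mathcomp Require Import all_boot.
From Stdlib Require Import Reals ZArith.
Set Implicit Arguments. Unset Strict Implicit. Unset Printing Implicit Defensive.

(* A digraph on vertex type T is a relation e : rel T (no parallel arcs by
   construction); "no loops" is the hypothesis irreflexive e. *)
Section Digraph.
Variable T : finType.
Variable e : rel T.

Definition Nout (v : T) : {set T} := [set u | e v u].
Definition Nin  (v : T) : {set T} := [set u | e u v].
Definition outdeg (v : T) : nat := #|Nout v|.
Definition indeg (v : T) : nat := #|Nin v|.
Definition qarc (u v : T) : nat := #|Nin u :\: Nin v|.
Definition tarc (u v : T) : nat := #|Nout u :&: Nout v|.

Definition has_short_cycle : Prop :=
  (exists a b : T, a != b /\ e a b /\ e b a) \/
  (exists a b c : T, [/\ uniq [:: a; b; c], e a b, e b c & e c a]) \/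
  (exists a b c d : T,
      [/\ uniq [:: a; b; c; d], e a b, e b c, e c d & e d a]).
End Digraph.

(* ceiling of a real number, as a natural number (for nonnegative x) *)
Definition ceil_nat (x : R) : nat := Z.to_nat (- Int_part (- x)).

From mathcomp Require Import all_boot zify.
From Stdlib Require Import Reals Lra Classical.

Set Implicit Arguments.
Unset Strict Implicit.
Unset Printing Implicit Defensive.

(* Write X = N^+(v).
   - Walks: in such a digraph no vertex x reached from a by a walk of length
     at most 3 can be a or have an arc back to a (that would close a cycle of
     length at most 4).  Hence any set R of vertices reached within 3 steps
     from both u and v is disjoint from {v} u N^-(v) u N^-(u), which gives
     1 + deg^-(v) + q(u,v) + |R| <= n  (two_sided_bound).
   - Sparse vertices: the induction hypothesis applied to the subgraph
     induced by a nonempty proper vertex set S yields w in S with fewer than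
     alpha|S| out-neighbours inside S  (sparse_vertex).
   - A sparse y in N^+(u) n X has at least (1-alpha) t(u,v) out-neighbours Z
     outside X  (escape_set); a sparse w in H = X u Z has more than
     r - alpha(r+|Z|) out-neighbours W outside H.  The set R = X u Z u W is
     reached within 3 steps from u and v, and |R| = r + |Z| + |W|;
     combining the bounds gives the theorem  (arc_bound). *)

Lemma cardsU_disjoint (T : finType) (A B : {set T}) :
  [disjoint A & B] -> #|A :|: B| = #|A| + #|B|.
Proof. by move=> dAB; apply/eqP; rewrite (leq_card_setU A B). Qed.

(* Every element of A lies outside X, in S, or in X minus S; so if |A| is at
   least |X|, then A has at least |S| elements outside X or inside S. *)
Lemma card_escape (T : finType) (A X S : {set T}) :
  S \subset X -> #|S| + #|A| <= #|A :\: X| + #|A :&: S| + #|X|.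
Proof.
move=> SX.
have splitA := cardsID X A.
have splitX : #|S| + #|X :\: S| = #|X|.
  by rewrite -(cardsID S X) (setIidPr SX).
have coverAX : #|A :&: X| <= #|A :&: S| + #|X :\: S|.
  apply: leq_trans (leq_card_setU _ _); apply: subset_leq_card.
  apply/subsetP => x; rewrite !inE => /andP[Ax Xx].
  by rewrite Ax Xx andbT; case: (x \in S).
lia.
Qed.

Lemma short_cycle_relpre (T T' : finType) (f : T -> T') (e : rel T') :
  injective f -> has_short_cycle (relpre f e) -> has_short_cycle e.
Proof.
move=> finj [[a [b [ab [h h']]]] | [[a [b [c [hu h1 h2 h3]]]]
                                 | [a [b [c [d [hu h1 h2 h3 h4]]]]]]].
- by left; exists (f a), (f b); rewrite (inj_eq finj).
- right; left; exists (f a), (f b), (f c); split => //.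
  by have := map_inj_uniq finj [:: a; b; c]; rewrite /= => ->.
- right; right; exists (f a), (f b), (f c), (f d); split => //.
  by have := map_inj_uniq finj [:: a; b; c; d]; rewrite /= => ->.
Qed.

Lemma outdeg_induced (T : finType) (e : rel T) (S : {set T}) (i : 'I_#|S|) :
  outdeg (relpre (@enum_val T (mem S)) e) i = #|Nout e (enum_val i) :&: S|.
Proof.
have image_out : [set enum_val j | j in Nout (relpre enum_val e) i]
                 = Nout e (enum_val i) :&: S.
  apply/setP => x; rewrite !inE; apply/imsetP/andP.
  - by move=> [j]; rewrite inE => ij ->; split => //; apply: enum_valP.
  - move=> [ix xS]; exists (enum_rank_in xS x); last by rewrite enum_rankK_in.
    by rewrite inE /= enum_rankK_in.
by rewrite -image_out card_imset //; apply: enum_val_inj.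
Qed.

Definition dense_forces_cycle (alpha : R) (m : nat) : Prop :=
  forall e : rel 'I_m, irreflexive e ->
  (forall v : 'I_m, (alpha * INR m <= INR (outdeg e v))%R) ->
  has_short_cycle e.

Section ShortCycleFree.
Variables (T : finType) (e : rel T).
Hypothesis e_irr : irreflexive e.
Hypothesis e_free : ~ has_short_cycle e.

(* walk_le k a b : there is a walk from a to b with between 1 and k arcs. *)
Fixpoint walk_le (k : nat) (a b : T) : Prop :=
  if k is k'.+1 then e a b \/ exists2 c, walk_le k' a c & e c b else False.

Lemma walk_le_arc {k} a b : e a b -> walk_le k.+1 a b.
Proof. by left. Qed.

Lemma walk_le_snoc k a b c : walk_le k a b -> e b c -> walk_le k.+1 a c.
Proof. by move=> ab bc; right; exists b. Qed.

Lemma walk_le_S k a b : walk_le k a b -> walk_le k.+1 a b.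
Proof.
elim: k b => [//|k IHk] b [ab | [c ac cb]]; first by left.
by right; exists c => //; apply: IHk.
Qed.

Lemma arc_neq a b : e a b -> a != b.
Proof. by move=> ab; apply/eqP => eq_ab; move: ab; rewrite eq_ab e_irr. Qed.

Lemma no_2cycle a b : e a b -> e b a -> False.
Proof. by move=> ab ba; apply: e_free; left; exists a, b; rewrite arc_neq. Qed.

Lemma no_3cycle a b c : e a b -> e b c -> e c a -> False.
Proof.
move=> ab bc ca; apply: e_free; right; left; exists a, b, c; split => //.
by rewrite /= !inE negb_or (arc_neq ab) (arc_neq bc) eq_sym (arc_neq ca).
Qed.

Lemma no_4cycle a b c d : e a b -> e b c -> e c d -> e d a -> False.
Proof.
move=> ab bc cd da; apply: e_free; right; right; exists a, b, c, d; split=> //.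
have ac : a != c by apply/eqP => eq_ac; by apply: (no_2cycle ab); rewrite eq_ac.
have bd : b != d by apply/eqP => eq_bd; by apply: (no_2cycle bc); rewrite eq_bd.
rewrite /= !inE !negb_or (arc_neq ab) (arc_neq bc) (arc_neq cd) ac bd /=.
by rewrite eq_sym (arc_neq da).
Qed.

Lemma no_short_closed_walk a : ~ walk_le 4 a a.
Proof.
case=> [|[c [ac | [d [ad | [f [af | [? []]] fd]] dc]] ca]].
- by rewrite e_irr.
- exact: no_2cycle ac ca.
- exact: no_3cycle ad dc ca.
- exact: no_4cycle af fd dc ca.
Qed.

Lemma no_return_self a : ~ walk_le 3 a a.
Proof. by move=> /walk_le_S; apply: no_short_closed_walk. Qed.

Lemma no_return_arc a b : walk_le 3 a b -> ~ e b a.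
Proof. by move=> ab ba; apply: (@no_short_closed_walk a); right; exists b. Qed.

(* Vertices reached within 3 steps from both ends of the arc (u,v) avoid
   v, N^-(v) and N^-(u); counting these disjoint parts bounds |T|. *)
Lemma two_sided_bound u v (R : {set T}) : e u v ->
  (forall x, x \in R -> walk_le 3 u x /\ walk_le 3 v x) ->
  1 + indeg e v + qarc e u v + #|R| <= #|T|.
Proof.
move=> uv reachR.
set N := Nin e v :|: Nin e u.
have vN : v \notin N.
  by rewrite !inE e_irr /=; apply/negP => vu; apply: no_2cycle uv vu.
have cardN : #|N| = indeg e v + qarc e u v.
  have := cardsID (Nin e v) (Nin e u).
  by rewrite /N cardsU /indeg /qarc setIC; lia.
have disjR : [disjoint v |: N & R].
  rewrite disjoint_sym disjoint_subset; apply/subsetP => x /reachR [ux vx].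
  rewrite !inE; apply/or3P => -[/eqP eq_xv | xv | xu].
  - by apply: (no_return_self (a := v)); rewrite -{2}eq_xv.
  - exact: no_return_arc vx xv.
  - exact: no_return_arc ux xu.
have cardNR : #|v |: N :|: R| = 1 + indeg e v + qarc e u v + #|R|.
  by rewrite cardsU_disjoint // cardsU1 vN cardN /= !addnA.
by rewrite -cardNR -cardsT subset_leq_card ?subsetT.
Qed.

Variable alpha : R.
Hypothesis smaller_dense :
  forall m, 0 < m -> m < #|T| -> dense_forces_cycle alpha m.

(* A nonempty vertex set missing some vertex contains a sparse vertex:
   otherwise its induced subgraph would contain a short cycle. *)
Lemma sparse_vertex (S : {set T}) x : x \notin S -> 0 < #|S| ->
  exists2 w, w \in S & (INR #|Nout e w :&: S| < alpha * INR #|S|)%R.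
Proof.
move=> xS S_gt0.
have S_small : #|S| < #|T|.
  rewrite -cardsT; apply: proper_card; rewrite properT.
  by apply: contraNneq xS => ->; rewrite inE.
apply: NNPP => no_sparse; apply: e_free.
apply: (short_cycle_relpre (@enum_val_inj _ (mem S))).
apply: (smaller_dense S_gt0 S_small) => [i | i]; first by rewrite /= e_irr.
rewrite outdeg_induced; apply: Rnot_lt_le => sparse_i.
by apply: no_sparse; exists (enum_val i) => //; apply: enum_valP.
Qed.

Variable k : nat.
Hypothesis alpha_le1 : (alpha <= 1)%R.
Hypothesis e_reg : forall x, outdeg e x = k.

Lemma escape_set u v : exists Z : {set T},
  [/\ [disjoint Nout e v & Z],
      forall z, z \in Z -> walk_le 2 u z /\ walk_le 2 v z &
      ((1 - alpha) * INR (tarc e u v) <= INR #|Z|)%R].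
Proof.
set X := Nout e v; set C := Nout e u :&: X.
have [C0 | C_gt0] := posnP #|C|.
  exists set0; split; first by rewrite disjoints_subset setC0 subsetT.
    by move=> z; rewrite inE.
  by rewrite /tarc -/X -/C C0 cards0 /=; lra.
have vC : v \notin C by rewrite !inE e_irr andbF.
have [y yC sparse_y] := sparse_vertex vC C_gt0.
exists (Nout e y :\: X); split.
- by rewrite disjoint_subset; apply/subsetP => z zX; rewrite inE in_setD zX.
- move=> z; rewrite !inE => /andP[_ yz].
  move: yC; rewrite /C /X !inE => /andP[uy vy].
  by split; apply: walk_le_snoc yz; apply: walk_le_arc.
- have := card_escape (Nout e y) (subsetIr (Nout e u) X).
  rewrite [#|Nout e y|]e_reg [#|X|]e_reg leq_add2r => /leP/le_INR.
  rewrite plus_INR -/C => esc.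
  by rewrite /tarc -/X -/C; lra.
Qed.

Lemma arc_bound u v : e u v ->
  (INR #|T| > INR k + INR (indeg e v) + INR (qarc e u v) + (1 - alpha) * INR k
              + (1 - alpha) ^ 2 * INR (tarc e u v))%R.
Proof.
move=> uv; set X := Nout e v.
have [Z [dXZ reachZ bigZ]] := escape_set u v.
set H := X :|: Z.
have cardH : #|H| = k + #|Z| by rewrite cardsU_disjoint // [#|X|]e_reg.
have reachH x : x \in H -> walk_le 2 u x /\ walk_le 2 v x.
  rewrite inE => /orP[vx | /reachZ //]; rewrite /X inE in vx.
  by split; [apply: walk_le_snoc (walk_le_arc uv) vx | apply: walk_le_arc].
have H_gt0 : 0 < #|H|.
  rewrite cardH -(e_reg u) addn_gt0; apply/orP; left.
  by apply/card_gt0P; exists v; rewrite inE.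
have vH : v \notin H.
  by apply/negP => /reachH [_ /walk_le_S]; apply: no_return_self.
have [w wH sparse_w] := sparse_vertex vH H_gt0.
set W := Nout e w :\: H.
have cardW : #|W| + #|Nout e w :&: H| = k by rewrite addnC cardsID; apply: e_reg.
have cardR : #|H :|: W| = k + #|Z| + #|W|.
  rewrite cardsU_disjoint ?cardH // disjoint_subset.
  by apply/subsetP => x xH; rewrite inE in_setD xH.
have reachR x : x \in H :|: W -> walk_le 3 u x /\ walk_le 3 v x.
  rewrite inE => /orP[/reachH [ux vx] | ]; first by split; apply: walk_le_S.
  rewrite !inE => /andP[_ wx]; have [uw vw] := reachH w wH.
  by split; apply: walk_le_snoc wx.
have := two_sided_bound uv reachR; rewrite cardR => /leP/le_INR.
rewrite !plus_INR /= => count.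
move: sparse_w; rewrite cardH plus_INR => sparse_w.
have := f_equal INR cardW; rewrite plus_INR => splitW.
(* |T| >= 1 + d + q + r + |Z| + |W| with |W| > r - alpha (r + |Z|) and
   (1 - alpha) |Z| >= (1 - alpha)^2 t. *)
have bigZ2 := Rmult_le_compat_l (1 - alpha) _ _ ltac:(lra) bigZ.
nra.
Qed.

End ShortCycleFree.

Theorem mainTheorem2 (alpha : R) (n : nat)
  (Halpha : (0 < alpha < 1)%R) (Hn : (0 < n)%N)
  (IH : forall m : nat, (1 <= m)%N -> (m < n)%N ->
        forall e : rel 'I_m, irreflexive e ->
        (forall v : 'I_m, (alpha * INR m <= INR (outdeg e v))%R) ->
        has_short_cycle e)
  (G : rel 'I_n) (HGloop : irreflexive G)
  (Hdeg : forall v : 'I_n, outdeg G v = ceil_nat (alpha * INR n))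
  (Hnocyc : ~ has_short_cycle G) :
  forall u v : 'I_n, G u v ->
    let r := INR (ceil_nat (alpha * INR n)) in
    (INR n > r + INR (indeg G v) + INR (qarc G u v) + (1 - alpha) * r
             + (1 - alpha) ^ 2 * INR (tarc G u v))%R.
Proof.
move=> u v uv r.
have smaller_dense m : 0 < m -> m < #|'I_n| -> dense_forces_cycle alpha m.
  by rewrite card_ord; apply: IH.
have alpha_le1 : (alpha <= 1)%R by lra.
have := arc_bound HGloop Hnocyc smaller_dense alpha_le1 Hdeg uv.
by rewrite card_ord.
Qed.
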